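(* Let $B\neq\emptyset$ be an event (a union of elements of $\Pi$) and let $X|B$ be a conditional gamble. Let $I\subset\mathbb{R}$ be an interval containing the image set $\{X(\omega):\omega\in\Pi,\ \omega\Rightarrow B\}$ of $X|B$, let $\phi:I\to\mathbb{R}$ be convex and $\psi:I\to\mathbb{R}$ be concave. Let $\mu$ be a real-valued uncertainty measure defined on the conditional gambles given $B$ (in particular on $X|B$ and on all gambles to which $\mu$ is applied below), satisfying axioms (M), (T), (PH), and let $\overline{\mu}$ be its conjugate, $\overline{\mu}(Y|B)=-\mu(-Y|B)$. Assume $\mu(X|B)$ is an interior point of $I$. (a) Let $J_\phi=[\phi'_-(\mu(X|B)),\phi'_+(\mu(X|B))]$. If there is $\lambda\in J_\phi$ with $\lambda\ge 0$, then $\mu(\phi(X|B))\ge\phi(\mu(X|B))$. If there is $\lambda\in J_\phi$ with $\lambda\le 0$, then $\overline{\mu}(\phi(X|B))\ge\phi(\mu(X|B))$. (b) Let $J_\psi=[\psi'_+(\mu(X|B)),\psi'_-(\mu(X|B))]$. If there is $\lambda\in J_\psi$ with $\lambda\ge 0$, then $\mu(\psi(X|B))\le\psi(\mu(X|B))$. If there is $\lambda\in J_\psi$ with $\lambda\le 0$, then $\overline{\mu}(\psi(X|B))\le\psi(\mu(X|B))$.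
   Context: $\Pi$ is a partition of the sure event into pairwise disjoint non-impossible events (possibly infinitely many); a gamble is a bounded map $X:\Pi\to\mathbb{R}$. For an event $B\neq\emptyset$ that is a union of elements of $\Pi$, the conditional gamble $X|B$ is the restriction of $X$ to the elements $\omega\in\Pi$ with $\omega\Rightarrow B$; for a real function $f$ defined on its image set, $f(X|B)$ is the conditional gamble $\omega\mapsto f(X(\omega))$ on those $\omega$. Axioms for $\mu$ (for all conditional gambles $X|B,Y|B$): (M) if $X|B\ge Y|B$ then $\mu(X|B)\ge\mu(Y|B)$; (T) $\mu(X+a|B)=\mu(X|B)+a$ for all $a\in\mathbb{R}$; (PH) $\mu(\lambda X|B)=\lambda\mu(X|B)$ for all $\lambda\ge 0$. $f'_+(x)$ and $f'_-(x)$ denote the right and left derivatives of $f$ at $x$. *)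

From mathcomp Require Import all_boot all_order all_algebra.
From mathcomp Require Import all_classical all_reals all_analysis.
Import Order.TTheory GRing.Theory Num.Theory.
Import numFieldNormedType.Exports.
Local Open Scope ring_scope.
Local Open Scope classical_set_scope.

Set Implicit Arguments.
Unset Strict Implicit.
Unset Printing Implicit Defensive.

Definition bounded_map {T : Type} {R : realType} (X : T -> R) : Prop :=
  exists M : R, forall w, `|X w| <= M.

(* The elements omega of Pi with omega => B are the inhabitants of
   {w : Pi | B w}; a conditional gamble given B is a bounded map on them. *)
Definition cgamble {Pi : Type} {R : realType} (B : set Pi) (X : Pi -> R)
  : {w : Pi | B w} -> R := fun w => X (proj1_sig w).
Arguments cgamble {Pi R} B X _.

Definition axiom_M {Om : Type} {R : realType} (mu : (Om -> R) -> R) : Prop :=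
  forall X Y : Om -> R, bounded_map X -> bounded_map Y ->
    (forall w, Y w <= X w) -> mu Y <= mu X.

Definition axiom_T {Om : Type} {R : realType} (mu : (Om -> R) -> R) : Prop :=
  forall (X : Om -> R) (a : R), bounded_map X ->
    mu (fun w => X w + a) = mu X + a.

Definition axiom_PH {Om : Type} {R : realType} (mu : (Om -> R) -> R) : Prop :=
  forall (X : Om -> R) (l : R), bounded_map X -> 0 <= l ->
    mu (fun w => l * X w) = l * mu X.

Definition conjugate {Om : Type} {R : realType} (mu : (Om -> R) -> R)
  : (Om -> R) -> R := fun Y => - mu (fun w => - Y w).

Definition convex_on {R : realType} (I : interval R) (f : R -> R) : Prop :=
  forall x y t, x \in I -> y \in I -> 0 <= t -> t <= 1 ->
    f (t * x + (1 - t) * y) <= t * f x + (1 - t) * f y.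

Definition concave_on {R : realType} (I : interval R) (f : R -> R) : Prop :=
  forall x y t, x \in I -> y \in I -> 0 <= t -> t <= 1 ->
    t * f x + (1 - t) * f y <= f (t * x + (1 - t) * y).

Definition right_deriv {R : realType} (f : R -> R) (x : R) : R :=
  lim ((fun h : R => (f (x + h) - f x) / h) @ (0 : R)^'+).

Definition left_deriv {R : realType} (f : R -> R) (x : R) : R :=
  lim ((fun h : R => (f (x + h) - f x) / h) @ (0 : R)^'-).

From mathcomp Require Import all_boot all_order all_algebra.
From mathcomp Require Import all_classical all_reals all_analysis.
From mathcomp Require Import ring lra.
Import Order.TTheory GRing.Theory Num.Theory.
Import numFieldNormedType.Exports.
Local Open Scope ring_scope.
Local Open Scope classical_set_scope.

Set Implicit Arguments.
Unset Strict Implicit.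
Unset Printing Implicit Defensive.

(* At an interior point m of I the difference quotients of a convex phi are
   monotone, so its one-sided derivatives exist, and every slope l between
   them gives a supporting line: phi m + l (x - m) <= phi x on I.  Take
   m = mu(X|B).  By (T) and (PH) the affine gamble phi m + l (X - m) has
   measure exactly phi m when l >= 0, so (M) yields phi m <= mu(phi(X|B));
   for l <= 0 the same argument applied to -phi(X|B) with slope -l bounds the
   conjugate.  The concave case follows by passing to -psi. *)

Definition diff_quot {R : realType} (f : R -> R) (m h : R) : R :=
  (f (m + h) - f m) / h.

Lemma interior_itv_ball (R : realType) (I : interval R) (m : R) :
  interior [set x | x \in I] m ->
  exists2 e : R, 0 < e & forall y, `|y| < e -> m + y \in I.
Proof.
move=> /nbhs_ballP[e e_gt0 ball_sub]; exists e => // y ye.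
by apply: ball_sub; rewrite -ball_normE /ball_ /= opprD addNKr normrN.
Qed.

Section ConvexDiffQuot.
Variables (R : realType) (I : interval R) (f : R -> R).
Hypothesis convex_f : convex_on I f.

Lemma convex_three_slopes (a b c : R) : a \in I -> c \in I -> a < b -> b < c ->
  (f b - f a) / (b - a) <= (f c - f a) / (c - a) /\
  (f c - f a) / (c - a) <= (f c - f b) / (c - b).
Proof.
move=> aI cI ab bc.
have ca : 0 < c - a by rewrite subr_gt0 (lt_trans ab bc).
have ba : 0 < b - a by rewrite subr_gt0.
have cb : 0 < c - b by rewrite subr_gt0.
pose t := (c - b) / (c - a).
have t0 : 0 <= t by rewrite divr_ge0 // ltW.
have t1 : t <= 1 by rewrite ler_pdivrMr // mul1r lerD2l lerN2 ltW.
have bE : t * a + (1 - t) * c = b by rewrite /t; field; rewrite lt0r_neq0.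
have := convex_f aI cI t0 t1; rewrite bE => /(ler_wpM2r (ltW ca)).
have -> : (t * f a + (1 - t) * f c) * (c - a) = (c - b) * f a + (b - a) * f c.
  by rewrite /t; field; rewrite lt0r_neq0.
move=> fb; split; rewrite ler_pdivrMr // mulrAC ler_pdivlMr //; nra.
Qed.

Lemma diff_quot_le (m h1 h2 : R) : m \in I -> m + h1 \in I -> m + h2 \in I ->
  h1 != 0 -> h2 != 0 -> h1 <= h2 -> diff_quot f m h1 <= diff_quot f m h2.
Proof.
have hE h : m + h - m = h by rewrite addrC addKr.
have slopeR h : (f (m + h) - f m) / (m + h - m) = diff_quot f m h.
  by rewrite hE.
have slopeL h : (f m - f (m + h)) / (m - (m + h)) = diff_quot f m h.
  by rewrite -opprB -[m - _]opprB invrN mulrNN slopeR.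
move=> mI h1I h2I h1_neq0 h2_neq0; rewrite le_eqVlt => /orP[/eqP -> //|h12].
have [h1_gt0|h1_le0] := ltP 0 h1.
  have m_lt : m < m + h1 by rewrite ltrDl.
  have lt_h2 : m + h1 < m + h2 by rewrite ltrD2l.
  by have [+ _] := convex_three_slopes mI h2I m_lt lt_h2; rewrite !slopeR.
have h1_lt0 : h1 < 0 by rewrite lt_neqAle h1_neq0.
have [h2_lt0|h2_ge0] := ltP h2 0.
  have lt_h2 : m + h1 < m + h2 by rewrite ltrD2l.
  have lt_m : m + h2 < m by rewrite gtrDl.
  by have [_] := convex_three_slopes h1I mI lt_h2 lt_m; rewrite !slopeL.
have lt_m : m + h1 < m by rewrite gtrDl.
have m_lt : m < m + h2 by rewrite ltrDl lt_neqAle eq_sym h2_neq0.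
have [] := convex_three_slopes h1I h2I lt_m m_lt.
by rewrite slopeL slopeR; apply: le_trans.
Qed.

Variables (m e : R).
Hypotheses (e_gt0 : 0 < e) (ball_in_I : forall y, `|y| < e -> m + y \in I).

Let mI : m \in I.
Proof. by have := @ball_in_I 0; rewrite addr0 normr0; apply. Qed.

Let e2_gt0 : 0 < e / 2. Proof. by rewrite divr_gt0. Qed.

Let e2_lt : e / 2 < e. Proof. by rewrite ltr_pdivrMr // ltr_pMr // ltr1n. Qed.

Lemma convex_right_deriv_cvg : cvg (diff_quot f m @ (0 : R)^'+).
Proof.
apply: nondecreasing_at_right_is_cvgr.
- near=> x.
  have xe : x < e by near: x; exact: nbhs_right_lt.
  move=> y z; rewrite !in_itv /= => /andP[y0 yx] /andP[z0 zx] yz.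
  apply: diff_quot_le; rewrite ?gt_eqF //; apply: ball_in_I.
  + by rewrite gtr0_norm // (lt_trans yx xe).
  + by rewrite gtr0_norm // (lt_trans zx xe).
- near=> x.
  have xe : x < e by near: x; exact: nbhs_right_lt.
  exists (diff_quot f m (- (e / 2))) => _ [y + <-].
  rewrite /= in_itv /= => /andP[y0 yx].
  apply: diff_quot_le; rewrite ?oppr_eq0 ?gt_eqF //.
  + by apply: ball_in_I; rewrite normrN gtr0_norm.
  + by apply: ball_in_I; rewrite gtr0_norm // (lt_trans yx xe).
  + by rewrite (le_trans _ (ltW y0)) // oppr_le0 ltW.
Unshelve. all: by end_near.
Qed.

Lemma convex_left_deriv_cvg : cvg (diff_quot f m @ (0 : R)^'-).
Proof.
apply: nondecreasing_at_left_is_cvgr.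
- near=> x.
  have xe : - e < x by near: x; apply: nbhs_left_gt; rewrite oppr_lt0.
  move=> y z; rewrite !in_itv /= => /andP[xy y0] /andP[xz z0] yz.
  apply: diff_quot_le; rewrite ?lt_eqF //; apply: ball_in_I.
  + by rewrite ltr0_norm // ltrNl (lt_trans xe xy).
  + by rewrite ltr0_norm // ltrNl (lt_trans xe xz).
- near=> x.
  have xe : - e < x by near: x; apply: nbhs_left_gt; rewrite oppr_lt0.
  exists (diff_quot f m (e / 2)) => _ [y + <-].
  rewrite /= in_itv /= => /andP[xy y0].
  apply: diff_quot_le; rewrite ?(lt_eqF y0) ?(gt_eqF e2_gt0) //.
  + by apply: ball_in_I; rewrite ltr0_norm // ltrNl (lt_trans xe xy).
  + by apply: ball_in_I; rewrite gtr0_norm.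
  + by rewrite (le_trans (ltW y0)) // ltW.
Unshelve. all: by end_near.
Qed.

Lemma right_deriv_le_diff_quot (h : R) : 0 < h -> m + h \in I ->
  right_deriv f m <= diff_quot f m h.
Proof.
move=> h_gt0 hI; apply: limr_le; first exact: convex_right_deriv_cvg.
near=> y.
have y0 : 0 < y by near: y; exact: nbhs_right_gt.
have yh : y < h by near: y; exact: nbhs_right_lt.
have ye : y < e by near: y; exact: nbhs_right_lt.
apply: diff_quot_le; rewrite ?gt_eqF ?ltW //.
by apply: ball_in_I; rewrite gtr0_norm.
Unshelve. all: by end_near.
Qed.

Lemma diff_quot_le_left_deriv (h : R) : h < 0 -> m + h \in I ->
  diff_quot f m h <= left_deriv f m.
Proof.
move=> h_lt0 hI; apply: limr_ge; first exact: convex_left_deriv_cvg.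
near=> y.
have y0 : y < 0 by near: y; exact: nbhs_left_lt.
have hy : h < y by near: y; exact: nbhs_left_gt.
have ey : - e < y by near: y; apply: nbhs_left_gt; rewrite oppr_lt0.
apply: diff_quot_le; rewrite ?lt_eqF ?ltW //.
by apply: ball_in_I; rewrite ltr0_norm // ltrNl.
Unshelve. all: by end_near.
Qed.

Lemma convex_support_line (l x : R) :
  left_deriv f m <= l -> l <= right_deriv f m -> x \in I ->
  f m + l * (x - m) <= f x.
Proof.
move=> left_le le_right xI; rewrite -lerBrDl.
have xE : m + (x - m) = x by rewrite addrC subrK.
have xmI : m + (x - m) \in I by rewrite xE.
have quotE : diff_quot f m (x - m) * (x - m) = f x - f m.
  have [->|x_neq_m] := eqVneq x m; first by rewrite !subrr mulr0.
  by rewrite /diff_quot divfK ?subr_eq0 // xE.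
have [xm|xm|->] := ltgtP x m.
- have h_lt0 : x - m < 0 by rewrite subr_lt0.
  have := diff_quot_le_left_deriv h_lt0 xmI.
  by move=> /le_trans/(_ left_le)/(ler_wnM2r (ltW h_lt0)); rewrite quotE.
- have h_gt0 : 0 < x - m by rewrite subr_gt0.
  have := right_deriv_le_diff_quot h_gt0 xmI.
  by move/(le_trans le_right)/(ler_wpM2r (ltW h_gt0)); rewrite quotE.
- by rewrite !subrr mulr0.
Qed.

End ConvexDiffQuot.

Lemma convex_onN (R : realType) (I : interval R) (f : R -> R) :
  concave_on I f -> convex_on I (fun x => - f x).
Proof.
by move=> concave_f x y t xI yI t0 t1; rewrite !mulrN -opprD lerN2 concave_f.
Qed.

Lemma diff_quotN (R : realType) (f : R -> R) (m : R) :
  diff_quot f m = - diff_quot (fun x => - f x) m.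
Proof.
by apply/funext => h; rewrite /diff_quot /= -mulNr opprB opprK addrC.
Qed.

Lemma right_derivN (R : realType) (f : R -> R) (m : R) :
  cvg (diff_quot (fun x => - f x) m @ (0 : R)^'+) ->
  right_deriv f m = - right_deriv (fun x => - f x) m.
Proof. by move=> cvg_quot; rewrite -limN // -diff_quotN. Qed.

Lemma left_derivN (R : realType) (f : R -> R) (m : R) :
  cvg (diff_quot (fun x => - f x) m @ (0 : R)^'-) ->
  left_deriv f m = - left_deriv (fun x => - f x) m.
Proof. by move=> cvg_quot; rewrite -limN // -diff_quotN. Qed.

Lemma concave_support_line (R : realType) (I : interval R) (f : R -> R)
    (m e l x : R) : concave_on I f -> 0 < e ->
  (forall y, `|y| < e -> m + y \in I) ->
  right_deriv f m <= l -> l <= left_deriv f m -> x \in I ->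
  f x <= f m + l * (x - m).
Proof.
move=> /convex_onN convex_g e_gt0 ball_in_I.
rewrite right_derivN;
  last by have := convex_right_deriv_cvg convex_g e_gt0 ball_in_I.
rewrite left_derivN;
  last by have := convex_left_deriv_cvg convex_g e_gt0 ball_in_I.
rewrite lerNl => right_le; rewrite lerNr => le_left xI.
have := convex_support_line convex_g e_gt0 ball_in_I le_left right_le xI.
lra.
Qed.

Section BoundedMap.
Variables (R : realType) (Om : Type).
Implicit Types (X Y : Om -> R) (c : R).

Lemma bounded_map_cst c : bounded_map (fun _ : Om => c).
Proof. by exists `|c|. Qed.

Lemma bounded_mapD X Y : bounded_map X -> bounded_map Y ->
  bounded_map (fun w => X w + Y w).
Proof.
move=> [M XM] [N YN]; exists (M + N) => w.
by rewrite (le_trans (ler_normD _ _)) ?lerD.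
Qed.

Lemma bounded_mapZ c X : bounded_map X -> bounded_map (fun w => c * X w).
Proof.
by move=> [M XM]; exists (`|c| * M) => w; rewrite normrM ler_wpM2l.
Qed.

Lemma bounded_mapN X : bounded_map X -> bounded_map (fun w => - X w).
Proof. by move=> [M XM]; exists M => w; rewrite normrN. Qed.

Lemma bounded_map_affine a l c X : bounded_map X ->
  bounded_map (fun w => a + l * (X w - c)).
Proof.
move=> bX; apply: (bounded_mapD (bounded_map_cst a)).
exact: (bounded_mapZ l (bounded_mapD bX (bounded_map_cst (- c)))).
Qed.

End BoundedMap.

Section AffineBounds.
Variables (R : realType) (Om : Type) (mu : (Om -> R) -> R).
Hypotheses (mu_M : axiom_M mu) (mu_T : axiom_T mu) (mu_PH : axiom_PH mu).
Variable X : Om -> R.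
Hypothesis bX : bounded_map X.

Lemma mu_affine (a l : R) : 0 <= l -> mu (fun w => a + l * (X w - mu X)) = a.
Proof.
move=> l_ge0.
have -> : (fun w => a + l * (X w - mu X)) =
          (fun w => l * X w + (a - l * mu X)).
  by apply/funext => w; ring.
rewrite mu_T ?mu_PH //; first ring.
exact: bounded_mapZ.
Qed.

Lemma mu_ge_of_minorant (a l : R) (Y : Om -> R) : bounded_map Y -> 0 <= l ->
  (forall w, a + l * (X w - mu X) <= Y w) -> a <= mu Y.
Proof.
move=> bY l_ge0 minor; rewrite -{1}(mu_affine a l_ge0).
by apply: mu_M => //; exact: bounded_map_affine.
Qed.

Lemma mu_le_of_majorant (a l : R) (Y : Om -> R) : bounded_map Y -> 0 <= l ->
  (forall w, Y w <= a + l * (X w - mu X)) -> mu Y <= a.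
Proof.
move=> bY l_ge0 major; rewrite -[leRHS](mu_affine a l_ge0).
by apply: mu_M => //; exact: bounded_map_affine.
Qed.

Lemma conjugate_ge_of_minorant (a l : R) (Y : Om -> R) :
  bounded_map Y -> l <= 0 ->
  (forall w, a + l * (X w - mu X) <= Y w) -> a <= conjugate mu Y.
Proof.
move=> bY l_le0 minor; rewrite /conjugate lerNr.
apply: (mu_le_of_majorant (l := - l) (bounded_mapN bY)).
  by rewrite oppr_ge0.
by move=> w; have := minor w; lra.
Qed.

Lemma conjugate_le_of_majorant (a l : R) (Y : Om -> R) :
  bounded_map Y -> l <= 0 ->
  (forall w, Y w <= a + l * (X w - mu X)) -> conjugate mu Y <= a.
Proof.
move=> bY l_le0 major; rewrite /conjugate lerNl.
apply: (mu_ge_of_minorant (l := - l) (bounded_mapN bY)).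
  by rewrite oppr_ge0.
by move=> w; have := major w; lra.
Qed.

End AffineBounds.

Theorem theorem3 (R : realType) (Pi : Type) (B : set Pi) (hB : B !=set0)
  (X : Pi -> R) (hX : bounded_map X)
  (I : interval R) (hI : forall w, B w -> X w \in I)
  (phi psi : R -> R) (hphi : convex_on I phi) (hpsi : concave_on I psi)
  (mu : ({w : Pi | B w} -> R) -> R)
  (hM : axiom_M mu) (hT : axiom_T mu) (hPH : axiom_PH mu)
  (hint : @interior R [set x : R | x \in I] (mu (cgamble B X))) :
  (bounded_map (fun w => phi (cgamble B X w)) ->
    ((exists l, left_deriv phi (mu (cgamble B X)) <= l
                /\ l <= right_deriv phi (mu (cgamble B X)) /\ 0 <= l) ->
       phi (mu (cgamble B X)) <= mu (fun w => phi (cgamble B X w)))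
    /\
    ((exists l, left_deriv phi (mu (cgamble B X)) <= l
                /\ l <= right_deriv phi (mu (cgamble B X)) /\ l <= 0) ->
       phi (mu (cgamble B X)) <= conjugate mu (fun w => phi (cgamble B X w))))
  /\
  (bounded_map (fun w => psi (cgamble B X w)) ->
    ((exists l, right_deriv psi (mu (cgamble B X)) <= l
                /\ l <= left_deriv psi (mu (cgamble B X)) /\ 0 <= l) ->
       mu (fun w => psi (cgamble B X w)) <= psi (mu (cgamble B X)))
    /\
    ((exists l, right_deriv psi (mu (cgamble B X)) <= l
                /\ l <= left_deriv psi (mu (cgamble B X)) /\ l <= 0) ->
       conjugate mu (fun w => psi (cgamble B X w)) <= psi (mu (cgamble B X)))).
Proof.
have [e e_gt0] := interior_itv_ball hint.
set Y := cgamble B X; set m := mu Y => ball_in_I.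
have bY : bounded_map Y by case: hX => M XM; exists M => w; exact: XM.
have YI w : Y w \in I by apply: hI; case: w.
have convex_support l : left_deriv phi m <= l -> l <= right_deriv phi m ->
    forall w, phi m + l * (Y w - m) <= phi (Y w).
  move=> lb ub w.
  exact: (convex_support_line hphi e_gt0 ball_in_I lb ub (YI w)).
have concave_support l : right_deriv psi m <= l -> l <= left_deriv psi m ->
    forall w, psi (Y w) <= psi m + l * (Y w - m).
  move=> ub lb w.
  exact: (concave_support_line hpsi e_gt0 ball_in_I ub lb (YI w)).
split=> b_comp; split=> -[l [lb [ub l_sgn]]].
- exact: (mu_ge_of_minorant hM hT hPH bY b_comp l_sgn
    (convex_support l lb ub)).
- exact: (conjugate_ge_of_minorant hM hT hPH bY b_comp l_sgn
    (convex_support l lb ub)).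
- exact: (mu_le_of_majorant hM hT hPH bY b_comp l_sgn
    (concave_support l lb ub)).
- exact: (conjugate_le_of_majorant hM hT hPH bY b_comp l_sgn
    (concave_support l lb ub)).
Qed.
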